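(* Let $\xi$ be a transcendental real number. For every positive integer $k$, $$(k+1) \bigl( 1 + \lambda_{k+1} (\xi) \bigr) \ge k \bigl( 1 + \lambda_k (\xi) \bigr).$$ Consequently, for every integer $n \ge k$, $$\lambda_n (\xi) \ge \frac{k \lambda_k (\xi) - n + k}{n}.$$
   Context: For an integer $n \ge 1$ and a real number $\xi$, $\lambda_n(\xi)$ denotes the supremum (possibly $+\infty$) of the real numbers $\lambda$ such that, for arbitrarily large real numbers $X$, the inequalities $0 < |x_0| \le X$, $\max_{1 \le m \le n} |x_0 \xi^m - x_m| \le X^{-\lambda}$ have a solution in integers $x_0, \ldots, x_n$. The inequalities are understood in the extended reals (if $\lambda_k(\xi)=+\infty$ then the right-hand sides are $+\infty$). *)

From HB Require Import structures.
From mathcomp Require Import all_boot all_order all_algebra.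
From mathcomp Require Import all_classical all_reals all_analysis.
Set Implicit Arguments. Unset Strict Implicit. Unset Printing Implicit Defensive.
Import Order.TTheory GRing.Theory Num.Theory.
Local Open Scope classical_set_scope.
Local Open Scope ring_scope.

Definition transcendental (R : realType) (xi : R) : Prop :=
  forall p : {poly int}, p != 0 -> (map_poly (fun z : int => z%:~R : R) p).[xi] != 0.

Definition lambda_set (R : realType) (n : nat) (xi : R) : set R :=
  [set lam | forall X0 : R, exists X : R, X0 <= X /\
     exists (x0 : int) (x : nat -> int),
       x0 != 0 /\ `|(x0%:~R : R)| <= X /\
       forall m : nat, (1 <= m <= n)%N ->
         `|(x0%:~R : R) * xi ^+ m - (x m)%:~R| <= X `^ (- lam)].

Definition lambda_exp (R : realType) (n : nat) (xi : R) : \bar R :=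
  ereal_sup [set r%:E | r in lambda_set n xi].

(* Let x_0 != 0 and x_1, ..., x_k be integers with |x_0| <= X and
   |x_0 xi^m - x_m| <= delta = X^-lambda.  Siegel's lemma gives integers
   q_0, ..., q_k, not all zero, with |q_j| <= N ~ X^(1/k) and
   sum_j q_j x_j = 0.  If d is the last index with q_d != 0 and s = k + 1 - d,
   multiplying this relation by xi^s shows that q_d x_0 xi^(k+1) is within
   O(N delta) of the integer - sum_(j<d) q_j x_(j+s).  Hence
   (q_d x_0, ..., q_d x_k, - sum_(j<d) q_j x_(j+s)) solves the system for k + 1
   with height ~ X^(1+1/k) and error ~ X^(1/k - lambda), which gives
   lambda_(k+1) >= (k lambda_k - 1) / (k + 1), i.e. the first inequality;
   iterating it gives the second. *)

From HB Require Import structures.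
From mathcomp Require Import all_boot all_order all_algebra.
From mathcomp Require Import all_classical all_reals all_analysis.
From mathcomp Require Import zify ring lra.
Set Implicit Arguments. Unset Strict Implicit. Unset Printing Implicit Defensive.
Import Order.TTheory GRing.Theory Num.Theory.
Local Open Scope ring_scope.

Lemma ler_norm_sum_mul (R : numDomainType) (I : finType) (a b : I -> R) (A B : R) :
  (forall i, `|a i| <= A) -> (forall i, `|b i| <= B) ->
  `|\sum_i a i * b i| <= #|I|%:R * (A * B).
Proof.
move=> ha hb; rewrite mulr_natl -sumr_const.
apply: le_trans (ler_norm_sum _ _ _) _; apply: ler_sum => j _.
by rewrite normrM ler_pM ?ha ?hb.
Qed.

Lemma siegel_lemma (k N S : nat) (v : nat -> int) : (0 < k)%N ->
  (forall j, (j <= k)%N -> (`|v j| <= S)%N) -> (2 * k.+1 * S < N ^ k)%N ->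
  exists q : nat -> int, [/\ exists2 j, (j <= k)%N & q j != 0,
    forall j, `|q j| <= N%:Z & \sum_(j < k.+1) q j * v j = 0].
Proof.
move=> k_gt0 vS SN.
have N_gt0 : (0 < N)%N by case: N SN; rewrite ?exp0n.
set B := (k.+1 * (N * S))%N.
pose L (g : {ffun 'I_k.+1 -> 'I_N.+1}) : int := \sum_(j < k.+1) (g j : nat)%:Z * v j.
have L_bound g : - B%:Z <= L g <= B%:Z.
  rewrite -ler_norml; apply: le_trans (@ler_norm_sum_mul _ _ _ _ N%:Z S%:Z _ _) _.
  - by move=> j; rewrite -abszE lez_nat -ltnS ltn_ord.
  - by move=> j; rewrite -abszE lez_nat vS // -ltnS.
  - by rewrite card_ord /B !PoszM natz.
have L_shift_ge0 g : 0 <= L g + B%:Z by rewrite -lerBlDr sub0r; case/andP: (L_bound g).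
have L_shift_lt g : (absz (L g + B%:Z)%R < (2 * B).+1)%N.
  by rewrite ltnS -lez_nat abszE ger0_norm // PoszM; case/andP: (L_bound g); lia.
pose f g : 'I_(2 * B).+1 := inord (absz (L g + B%:Z)).
(* Pigeonhole: there are more vectors g than possible values of L g. *)
have /injectivePn [g1 [g2 g12 fg12]] : ~~ injectiveb f.
  apply/injectiveP => /leq_card; rewrite card_ffun !card_ord leqNgt.
  suff : ((2 * B).+1 < N.+1 * N.+1 ^ k)%N by rewrite -expnS => ->.
  have : (N ^ k <= N.+1 ^ k)%N by rewrite leq_exp2r.
  rewrite /B; nia.
have L12 : L g1 = L g2.
  move/(congr1 val): fg12; rewrite /f /= !inordK // => /(congr1 Posz).
  by rewrite !abszE !ger0_norm // => /addIr.
have [i g12i] : exists i, g1 i != g2 i.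
  by apply/existsP; apply: contraR g12 => /existsPn g12; apply/eqP/ffunP => i; apply/eqP/negPn.
exists (fun j => (g1 (inord j) : nat)%:Z - (g2 (inord j) : nat)%:Z); split.
- exists i; first by rewrite -ltnS ltn_ord.
  by rewrite inord_val subr_eq0; apply: contra g12i => /eqP [] /val_inj ->.
- move=> j; have := ltn_ord (g1 (inord j)); have := ltn_ord (g2 (inord j)).
  by rewrite -abszE lez_nat; lia.
- under eq_bigr => j _ do rewrite inord_val mulrBl.
  by rewrite sumrB -/(L g1) L12 subrr.
Qed.

Lemma exists_last_nonzero (V : nmodType) (q : nat -> V) (k : nat) :
  (exists2 j, (j <= k)%N & q j != 0) ->
  exists d, [/\ (d <= k)%N, q d != 0 & forall j, (d < j <= k)%N -> q j = 0].
Proof.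
move=> [j jk qj].
have ex_j : exists j, (j <= k)%N && (q j != 0) by exists j; rewrite jk qj.
have [d /andP[dk qd] d_max] := ex_maxnP ex_j (fun i => @proj1 _ _ \o andP).
exists d; split=> // i /andP[di ik]; apply/eqP; apply: contraTT di => qi.
by rewrite -leqNgt d_max // ik.
Qed.

Lemma sum_ord_trunc (V : nmodType) (F : nat -> V) (d k : nat) : (d <= k)%N ->
  (forall j, (d < j <= k)%N -> F j = 0) -> \sum_(j < k.+1) F j = \sum_(j < d.+1) F j.
Proof.
move=> dk F0; rewrite [RHS](big_ord_widen k.+1 F) //.
rewrite [LHS](bigID (fun j : 'I_k.+1 => (j < d.+1)%N)) /=.
rewrite [X in _ + X]big1 ?addr0 // => j; rewrite -leqNgt => dj.
by rewrite F0 // dj -ltnS ltn_ord.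
Qed.

Lemma shift_relation_identity (R : comPzRingType) (xi x0 : R) (q y : nat -> R) (d s : nat) :
  \sum_(j < d.+1) q j * y j = 0 ->
  q d * x0 * xi ^+ (d + s) + \sum_(j < d) q j * y (j + s)%N =
  xi ^+ s * \sum_(j < d.+1) q j * (x0 * xi ^+ j - y j)
  - \sum_(j < d) q j * (x0 * xi ^+ (j + s) - y (j + s)%N).
Proof.
move=> rel.
have sum_mulrB n (a b : nat -> R) :
    \sum_(j < n) q j * (a j - b j) = \sum_(j < n) q j * a j - \sum_(j < n) q j * b j.
  by rewrite -sumrB; apply: eq_bigr => j _; rewrite mulrBr.
rewrite (sum_mulrB _ (fun j => x0 * xi ^+ j) y) rel subr0.
rewrite (sum_mulrB _ (fun j => x0 * xi ^+ (j + s)) (fun j => y (j + s)%N)).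
have shift : xi ^+ s * \sum_(j < d) q j * (x0 * xi ^+ j) =
    \sum_(j < d) q j * (x0 * xi ^+ (j + s)).
  by rewrite mulr_sumr; apply: eq_bigr => j _; rewrite exprD; ring.
by rewrite big_ord_recr /= mulrDr shift exprD; ring.
Qed.

Lemma shift_relation_bound (R : numDomainType) (xi x0 N del : R) (q y : nat -> R) (d s : nat) :
  (0 < s)%N -> (forall j, `|q j| <= N) ->
  (forall j, (j < d + s)%N -> `|x0 * xi ^+ j - y j| <= del) ->
  \sum_(j < d.+1) q j * y j = 0 ->
  `|q d * x0 * xi ^+ (d + s) + \sum_(j < d) q j * y (j + s)%N|
    <= (`|xi| ^+ s * d.+1%:R + d%:R) * (N * del).
Proof.
move=> s_gt0 qN err rel; rewrite shift_relation_identity //.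
apply: le_trans (ler_normB _ _) _; rewrite mulrDl -mulrA normrM normrX.
apply: lerD; first apply: ler_wpM2l; rewrite ?exprn_ge0 //.
all: apply: le_trans (ler_norm_sum_mul _ _) _ => [j|j|]; rewrite ?card_ord //.
all: by apply: err; case: j => j /=; lia.
Qed.

Lemma exists_pow_gt_root (R : realType) (k A : nat) : (0 < k)%N ->
  exists2 N : nat, (A < N ^ k)%N & N%:R <= A%:R `^ k%:R^-1 + 1 :> R.
Proof.
move=> k_gt0; set r := A%:R `^ k%:R^-1.
have r_ge0 : 0 <= r by apply: powR_ge0.
exists (Num.truncn r).+1; last by rewrite -natr1 lerD2r truncn_le.
have r_lt : r < (Num.truncn r).+1%:R by rewrite -truncn_lt_nat.
have A_pow : A%:R = r ^+ k :> R.
  by rewrite -powR_mulrn // -powRrM mulVf ?powRr1 // pnatr_eq0 -lt0n.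
by rewrite -(ltr_nat R) natrX A_pow ltrXn2r ?gtn_eqF ?nnegrE.
Qed.

Lemma exists_siegel_parameter (R : realType) (k H : nat) (X b : R) :
  (0 < k)%N -> 1 <= X -> 1 <= b -> H%:R <= X * b ->
  exists2 N : nat, (2 * k.+1 * H < N ^ k)%N & N%:R <= (2 * k.+1%:R * b + 1) * X `^ k%:R^-1.
Proof.
move=> k_gt0 X_ge1 b_ge1 H_le.
have [N HN N_le] := exists_pow_gt_root R (2 * k.+1 * H) k_gt0.
exists N => //; apply: le_trans N_le _.
set c := 2 * k.+1%:R * b.
have c_ge1 : 1 <= c.
  have : 1 <= k.+1%:R :> R by rewrite ler1n.
  by rewrite /c; nra.
have A_le : (2 * k.+1 * H)%:R <= c * X.
  rewrite !natrM -!mulrA [b * X]mulrC; apply: ler_wpM2l => //.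
  by apply: ler_wpM2l.
have k_inv_ge0 : 0 <= k%:R^-1 :> R by rewrite invr_ge0 ler0n.
have Xk_ge1 : 1 <= X `^ k%:R^-1.
  by rewrite -[leLHS](powRr0 X); apply: ler_powR.
rewrite mulrDl mul1r lerD //.
apply: le_trans (ge0_ler_powR _ _ _ A_le) _; rewrite ?nnegrE ?mulr_ge0 //; try lra.
by rewrite powRM ?ler_wpM2r ?ler1_powR ?powR_ge0 ?invf_le1 ?ler1n ?ltr0n //; lra.
Qed.

Lemma powR_exponent_tradeoff (R : realType) (c X a b lam mu : R) : 0 < c -> 0 < X ->
  c `^ (1 + mu) <= X `^ (lam - a - b * mu) ->
  c * X `^ a * X `^ (- lam) <= (c * X `^ b) `^ (- mu).
Proof.
move=> c_gt0 X_gt0 cX.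
have powRD' (z r s : R) : 0 < z -> z `^ (r + s) = z `^ r * z `^ s.
  by move=> z_gt0; rewrite powRD // (gt_eqF z_gt0) implybT.
set e := X `^ (a + - lam).
have lhs : c * X `^ a * X `^ (- lam) = c `^ (- mu) * e * c `^ (1 + mu).
  have c_split : c `^ (1 + mu) * c `^ (- mu) = c by rewrite -powRD' // addrK powRr1 // ltW.
  by rewrite -mulrA -powRD' // -/e -{1}c_split; ring.
have rhs : (c * X `^ b) `^ (- mu) = c `^ (- mu) * e * X `^ (lam - a - b * mu).
  rewrite powRM ?powR_ge0 ?ltW // -powRrM -mulrA -powRD' //.
  by congr (_ * _ `^ _); ring.
by rewrite lhs rhs ler_wpM2l // mulr_ge0 ?powR_ge0.
Qed.

Section ApproximationExponents.
Variables (R : realType) (xi : R).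

Lemma normrX_le_expr1D (j n : nat) : (j <= n)%N -> `|xi| ^+ j <= (1 + `|xi|) ^+ n.
Proof.
move=> jn; have xi_j_le : `|xi| ^+ j <= (1 + `|xi|) ^+ j.
  by rewrite lerXn2r ?nnegrE ?addr_ge0 ?lerDr.
by apply: le_trans xi_j_le (ler_weXn2l _ _); rewrite ?lerDl.
Qed.

Lemma approximant_norm_le (X del : R) (x0 xj : int) (j n : nat) : (j <= n)%N ->
  `|x0%:~R| <= X -> `|x0%:~R * xi ^+ j - xj%:~R| <= del ->
  `|xj%:~R| <= X * (1 + `|xi|) ^+ n + del.
Proof.
move=> jn x0_le err; rewrite -[xj%:~R](subKr (x0%:~R * xi ^+ j)).
apply: le_trans (ler_normB _ _) (lerD _ err); rewrite normrM normrX.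
by apply: ler_pM; rewrite ?exprn_ge0 ?normrX_le_expr1D.
Qed.

Lemma extend_approximation (k N H : nat) (del : R) (x : nat -> int) :
  (0 < k)%N -> x 0%N != 0 ->
  (forall j, (j <= k)%N -> (`|x j| <= H)%N) -> (2 * k.+1 * H < N ^ k)%N ->
  (forall j, (j <= k)%N -> `|(x 0%N)%:~R * xi ^+ j - (x j)%:~R| <= del) ->
  exists y0 (y : nat -> int), [/\ y0 != 0, `|y0| <= N%:Z * `|x 0%N| &
    forall m, (1 <= m <= k.+1)%N -> `|y0%:~R * xi ^+ m - (y m)%:~R|
      <= k.+1%:R * ((1 + `|xi|) ^+ k.+1 + 1) * (N%:R * del)].
Proof.
move=> k_gt0 x0_neq0 xH HN err.
have [q [q_neq0 qN rel]] := siegel_lemma k_gt0 xH HN.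
have [d [dk qd_neq0 q_after_d]] := exists_last_nonzero q_neq0.
have rel_d : \sum_(j < d.+1) q j * x j = 0.
  by rewrite -(sum_ord_trunc (F := fun j => q j * x j) dk) // => j /q_after_d ->; rewrite mul0r.
set s := (k.+1 - d)%N.
have intr_sum_mul n (f g : nat -> int) :
    (\sum_(j < n) f j * g j)%:~R = \sum_(j < n) (f j)%:~R * (g j)%:~R :> R.
  by rewrite rmorph_sum; apply: eq_bigr => j _; rewrite rmorphM.
have qR j : `|(q j)%:~R : R| <= N%:R by rewrite -intr_norm -mulrz_nat ler_int natz.
have del_ge0 : 0 <= del by apply: le_trans (err 0%N _); rewrite ?expr0 ?mulr1.
set B := (1 + `|xi|) ^+ k.+1.
have B_ge1 : 1 <= B by rewrite exprn_ege1 // lerDl.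
exists (q d * x 0%N), (fun m =>
  if (m <= k)%N then q d * x m else - \sum_(j < d) q j * x (j + s)%N); split.
- by rewrite mulf_neq0.
- by rewrite normrM ler_wpM2r.
move=> m /andP[m_ge1 m_le]; case: ifP => mk.
  rewrite !intrM -mulrA -mulrBr normrM.
  apply: le_trans (ler_pM _ _ (qR d) (err m mk)) _; rewrite ?normr_ge0 //.
  by rewrite ler_peMl ?mulr_ge0 // mulr_ege1 // ?ler1n // lerDr; apply: le_trans B_ge1.
have -> : m = (d + s)%N by rewrite /s; lia.
rewrite mulrNz opprK !intrM (intr_sum_mul d q (fun j => x (j + s)%N)).
have rel_R : \sum_(j < d.+1) (q j)%:~R * (x j)%:~R = 0 :> R.
  by rewrite -(intr_sum_mul d.+1 q x) rel_d.
apply: le_trans (shift_relation_bound (y := fun j => (x j)%:~R) (del := del) _ qR _ rel_R) _.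
- by rewrite /s; lia.
- by move=> j js; apply: err; rewrite /s in js; lia.
have xi_s : `|xi| ^+ s <= B by apply: normrX_le_expr1D; rewrite /s; lia.
have d_le : d%:R <= k.+1%:R :> R by rewrite ler_nat; lia.
apply: ler_wpM2r; first by rewrite mulr_ge0.
rewrite mulrDr mulr1 mulrC lerD //.
by apply: ler_pM; rewrite ?exprn_ge0 ?ler_nat.
Qed.

Lemma transference_step (k : nat) : (0 < k)%N ->
  exists2 c : R, 1 <= c & forall (X del : R) (x0 : int) (x : nat -> int),
    1 <= X -> del <= 1 -> x0 != 0 -> `|x0%:~R| <= X ->
    (forall m, (1 <= m <= k)%N -> `|x0%:~R * xi ^+ m - (x m)%:~R| <= del) ->
    exists y0 (y : nat -> int), [/\ y0 != 0, `|y0%:~R| <= c * X `^ (1 + k%:R^-1) &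
      forall m, (1 <= m <= k.+1)%N ->
        `|y0%:~R * xi ^+ m - (y m)%:~R| <= c * X `^ k%:R^-1 * del].
Proof.
move=> k_gt0.
set b := (1 + `|xi|) ^+ k.+1 + 1.
have b_ge1 : 1 <= b by rewrite lerDr exprn_ge0 ?addr_ge0.
set E := k.+1%:R * b.
set D := 2 * k.+1%:R * b + 1.
have k1_ge1 : 1 <= k.+1%:R :> R by rewrite ler1n.
have E_ge1 : 1 <= E by apply: mulr_ege1.
have D_ge1 : 1 <= D by rewrite lerDr !mulr_ge0 //; lra.
exists (E * D); first exact: mulr_ege1.
move=> X del x0 x X_ge1 del_le1 x0_neq0 x0_le err.
pose xx j := if j is 0 then x0 else x j.
have del_ge0 : 0 <= del by apply: le_trans (err 1%N _).
have xx_err j : (j <= k)%N -> `|(xx 0%N)%:~R * xi ^+ j - (xx j)%:~R| <= del.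
  by case: j => [|j] jk; rewrite /= ?expr0 ?mulr1 ?subrr ?normr0 // err.
set H := \max_(j < k.+1) `|xx j|%N.
have xx_H j : (j <= k)%N -> (`|xx j| <= H)%N.
  by rewrite -ltnS => jk; apply: (leq_bigmax (Ordinal jk)).
have H_le : H%:R <= X * b.
  have [j0 max_j0] := bigop.eq_bigmax (fun j : 'I_k.+1 => `|xx j|%N) ltac:(by rewrite card_ord).
  rewrite /H max_j0 natr_absz intr_norm /b mulrDr mulr1.
  have j0k : (j0 <= k)%N by rewrite -ltnS.
  apply: le_trans (approximant_norm_le (ltnW (ltn_ord j0)) x0_le (xx_err j0 j0k)) _.
  by rewrite lerD2l; lra.
have [N HN N_le] := exists_siegel_parameter k_gt0 X_ge1 b_ge1 H_le.
have [y0 [y [y0_neq0 y0_le y_err]]] := extend_approximation k_gt0 x0_neq0 xx_H HN xx_err.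
have X_gt0 : 0 < X by lra.
have Xk_ge0 : 0 <= X `^ k%:R^-1 by apply: powR_ge0.
exists y0, y; split=> // [|m m_range].
- have y0_leR : `|y0%:~R| <= N%:R * X :> R.
    move: y0_le; rewrite -(ler_int R) intrM -pmulrn !intr_norm => y0_le.
    by apply: le_trans y0_le _; rewrite ler_wpM2l.
  rewrite powRD ?gt_eqF ?implybT // powRr1; last lra.
  apply: le_trans y0_leR _; rewrite -mulrA.
  apply: le_trans (_ : _ <= D * (X * X `^ k%:R^-1)) _.
    by rewrite [X * _]mulrC mulrA ler_pM2r.
  by rewrite ler_peMl ?mulr_ge0 //; lra.
- apply: le_trans (y_err m m_range) _.
  have N_del : N%:R * del <= D * X `^ k%:R^-1 * del by apply: ler_wpM2r.
  by apply: le_trans (ler_wpM2l _ N_del) _; rewrite ?mulrA //; lra.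
Qed.

Lemma lambda_set_nonpos (n : nat) (lam : R) : lam <= 0 -> lambda_set n xi lam.
Proof.
move=> lam_le0 X0; exists (Num.max X0 1); split; first by rewrite le_max lexx.
have X_ge1 : 1 <= Num.max X0 1 by rewrite le_max lexx orbT.
exists 1, (fun m => Num.floor (xi ^+ m)); split=> //.
split=> [|m _]; first by rewrite normr1.
rewrite mul1r ger0_norm ?subr_ge0 ?floor_le //.
apply: le_trans (_ : 1 <= _); first by rewrite lerBlDl ltW // -intrD1 floorD1_gt.
by rewrite -[leLHS](powRr0 (Num.max X0 1)); apply: ler_powR; rewrite ?oppr_ge0.
Qed.

Lemma lambda_set_succ (k : nat) (lam mu : R) : (0 < k)%N -> lambda_set k xi lam ->
  mu < (k%:R * lam - 1) / k.+1%:R -> lambda_set k.+1 xi mu.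
Proof.
move=> k_gt0 lam_in mu_lt.
have [mu_le0|mu_gt0] := leP mu 0; first exact: lambda_set_nonpos.
have [c c_ge1 step] := transference_step k_gt0.
set gam := lam - k%:R^-1 - (1 + k%:R^-1) * mu.
have k_gt0R : 0 < k%:R :> R by rewrite ltr0n.
have gam_gt0 : 0 < gam.
  have -> : gam = (k%:R * lam - 1 - k.+1%:R * mu) / k%:R.
    by rewrite /gam -natr1; field; rewrite gt_eqF.
  by rewrite divr_gt0 // subr_gt0 mulrC -ltr_pdivlMr ?ltr0n.
have lam_gt0 : 0 < lam.
  have : 0 <= k%:R^-1 * mu by rewrite mulr_ge0 ?invr_ge0 ?ltW.
  have : 0 <= k%:R^-1 :> R by rewrite invr_ge0 ltW.
  by move: gam_gt0; rewrite /gam; lra.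
move=> Y0.
set c' := c `^ (1 + mu).
have [X [X_ge [x0 [x [x0_neq0 [x0_le err]]]]]] := lam_in (Num.max Y0 (Num.max 1 (c' `^ gam^-1))).
move: X_ge; rewrite !ge_max => /and3P[Y0_le X_ge1 X_large].
have del_le1 : X `^ (- lam) <= 1.
  by rewrite -[leRHS](powRr0 X); apply: ler_powR; rewrite // oppr_le0 ltW.
have [y0 [y [y0_neq0 y0_le y_err]]] := step X _ x0 x X_ge1 del_le1 x0_neq0 x0_le err.
exists (c * X `^ (1 + k%:R^-1)); split.
  apply: le_trans Y0_le (le_trans (le1r_powR _ _) (ler_peMl _ _)); rewrite ?powR_ge0 //.
  by rewrite lerDl invr_ge0 ltW.
exists y0, y; do 2!split=> //; move=> m m_range.
apply: le_trans (y_err m m_range) (powR_exponent_tradeoff _ _ _); try lra.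
have c'_eq : c' = (c' `^ gam^-1) `^ gam by rewrite -powRrM mulVf ?powRr1 ?powR_ge0 ?gt_eqF.
rewrite -/c' -/gam c'_eq.
have X_ge0 : 0 <= X by lra.
by apply: ge0_ler_powR; rewrite ?nnegrE ?powR_ge0 // ltW.
Qed.

Lemma lambda_exp_ge (n : nat) (lam : R) : lambda_set n xi lam -> (lam%:E <= lambda_exp n xi)%E.
Proof. by move=> lam_in; apply: ereal_sup_ubound; exists lam. Qed.

Lemma lambda_exp_ge0 (n : nat) : (0 <= lambda_exp n xi)%E.
Proof. exact/lambda_exp_ge/lambda_set_nonpos. Qed.

Lemma lambda_exp_succ (k : nat) : (0 < k)%N ->
  (k%:R%:E * (1 + lambda_exp k xi) <= k.+1%:R%:E * (1 + lambda_exp k.+1 xi))%E.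
Proof.
move=> k_gt0; have k_gt0R : 0 < k%:R :> R by rewrite ltr0n.
have := lambda_exp_ge0 k.+1; case L1 : (lambda_exp k.+1 xi) => [r| |] // r_ge0; last first.
  by rewrite addey // mulry gtr0_sg ?ltr0n // mul1e leey.
set b := k.+1%:R * (1 + r) / k%:R - 1.
have L_le_b : (lambda_exp k xi <= b%:E)%E.
  apply: ge_ereal_sup => _ [lam lam_in <-]; rewrite lee_fin.
  have : (k%:R * lam - 1) / k.+1%:R <= r.
    apply/unstable.ler_ltP => mu mu_lt; rewrite -lee_fin -L1.
    exact/lambda_exp_ge/(lambda_set_succ k_gt0 lam_in mu_lt).
  by rewrite ler_pdivrMr ?ltr0n // /b lerBrDr ler_pdivlMr //; lra.
have := lambda_exp_ge0 k; case: (lambda_exp k xi) L_le_b => [s| |] // s_le_b _.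
rewrite -!EFinD -!EFinM !lee_fin in s_le_b *.
have -> : k.+1%:R * (1 + r) = k%:R * (1 + b) by rewrite /b; field; rewrite gt_eqF.
by rewrite ler_pM2l // lerD2l.
Qed.

Lemma lambda_exp_chain (k n : nat) : (0 < k)%N -> (k <= n)%N ->
  (k%:R%:E * (1 + lambda_exp k xi) <= n%:R%:E * (1 + lambda_exp n xi))%E.
Proof.
move=> k_gt0; elim: n => [|n IH]; first by rewrite leqn0 => /eqP k0; rewrite k0 in k_gt0.
rewrite leq_eqVlt ltnS => /orP[/eqP-> //|kn].
exact: le_trans (IH kn) (lambda_exp_succ (leq_trans k_gt0 kn)).
Qed.

End ApproximationExponents.

Local Open Scope ereal_scope.

Theorem theorem2p4 (R : realType) (xi : R) (hxi : transcendental xi) (k : nat)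
  (hk : (0 < k)%N) :
  (k%:R%:E * (1 + lambda_exp k xi) <= k.+1%:R%:E * (1 + lambda_exp k.+1 xi))
  /\ (forall n : nat, (k <= n)%N ->
        (k%:R%:E * lambda_exp k xi - n%:R%:E + k%:R%:E) * ((n%:R)^-1)%:E
          <= lambda_exp n xi).
Proof.
split=> [|n kn]; first exact: lambda_exp_succ.
have n_gt0 : (0 < n%:R :> R)%R by rewrite ltr0n (leq_trans hk kn).
have := lambda_exp_chain xi hk kn.
have := lambda_exp_ge0 xi n; case: (lambda_exp n xi) => [s| |] // _; last by rewrite leey.
have := lambda_exp_ge0 xi k; case: (lambda_exp k xi) => [r| |] // _; last first.
  by rewrite addey // mulry gtr0_sg ?ltr0n // mul1e -EFinD -EFinM leye_eq.
rewrite -!EFinD -!EFinM !lee_fin => chain.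
by rewrite ler_pdivrMr //; lra.
Qed.
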